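(* Let $n\ge 3$ be an integer, let $\Delta_n=\{x=(x_1,\dots,x_n)\in\mathbb{R}^n : x_i\ge 0 \text{ for all } i,\ x_1+\cdots+x_n=1\}$ be the probability simplex, and let $u=(\tfrac1n,\dots,\tfrac1n)\in\Delta_n$. For every $p\in\Delta_n\setminus\{u\}$ there are unique points $a(p),b(p)\in\Delta_n$ such that $\{u,p\}\subseteq[a(p),b(p)]$ and $\|a(p)-b(p)\|$ is maximal among all segments in $\Delta_n$ containing $u$ and $p$ (here $a(p)$ is the endpoint on the side of $u$ opposite to $p$, and $b(p)$ the endpoint on the side of $p$). Then the maximum value of $$\max_{p\in\Delta_n\setminus\{u\}} \frac{\langle a(p),b(p)\rangle}{\|a(p)\|\,\|b(p)\|}$$ is $\dfrac{n-2}{n+2}$, and a pair realizing this maximum is $a^*=\tfrac1n(2,1,1,\dots,1,0)$, $b^*=\tfrac1n(0,1,1,\dots,1,2)$. Consequently, the minimal angle spread, i.e. the minimum over $p\in\Delta_n\setminus\{u\}$ of the angle $\arccos\big(\langle a(p),b(p)\rangle/(\|a(p)\|\|b(p)\|)\big)$, equals $\arccos\big(\tfrac{n-2}{n+2}\big)$.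
   Context: $\mathbb{R}^n$ carries the standard Euclidean inner product $\langle\cdot,\cdot\rangle$ and norm $\|\cdot\|$. For $a,b\in\mathbb{R}^n$, $[a,b]=\{(1-t)a+tb: t\in[0,1]\}$ denotes the closed line segment. The angle between nonzero vectors $a,b$ is $\measuredangle(a,b)=\arccos\big(\langle a,b\rangle/(\|a\|\|b\|)\big)$. *)

From mathcomp Require Import all_boot all_order all_algebra.
From mathcomp Require Import all_classical all_reals all_analysis.
Set Implicit Arguments. Unset Strict Implicit. Unset Printing Implicit Defensive.
Import Order.TTheory GRing.Theory Num.Theory.
Local Open Scope ring_scope.

Section Defs.
Variable R : realType.

Definition dot n (x y : 'rV[R]_n) : R := \sum_(i < n) x ord0 i * y ord0 i.
Definition enorm n (x : 'rV[R]_n) : R := Num.sqrt (dot x x).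

Definition cosang n (a b : 'rV[R]_n) : R := dot a b / (enorm a * enorm b).
Definition angle n (a b : 'rV[R]_n) : R := acos (cosang a b).

Definition in_seg n (a b x : 'rV[R]_n) : Prop :=
  exists t : R, 0 <= t <= 1 /\ x = (1 - t) *: a + t *: b.

Definition in_simplex n (x : 'rV[R]_n) : Prop :=
  (forall i, 0 <= x ord0 i) /\ \sum_(i < n) x ord0 i = 1.

Definition ubar n : 'rV[R]_n := \row_(i < n) n%:R^-1.

(* [a,b] is a segment in Delta_n containing u and p, of maximal length
   among all such segments, with a on the side of u opposite to p
   (u lies in [a,p]) and b on the side of p. *)
Definition max_seg n (p a b : 'rV[R]_n) : Prop :=
  in_simplex a /\ in_simplex b /\ in_seg a b (ubar n) /\ in_seg a b p /\
      in_seg a p (ubar n) /\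
      (forall a' b', in_simplex a' -> in_simplex b' ->
         in_seg a' b' (ubar n) -> in_seg a' b' p ->
         enorm (a' - b') <= enorm (a - b)).

Definition a_star n : 'rV[R]_n :=
  \row_(i < n) ((if (i : nat) == 0%N then 2 else if (i : nat) == n.-1 then 0 else 1) / n%:R).
Definition b_star n : 'rV[R]_n :=
  \row_(i < n) ((if (i : nat) == 0%N then 0 else if (i : nat) == n.-1 then 2 else 1) / n%:R).

End Defs.

From mathcomp Require Import all_boot all_order all_algebra.
From mathcomp Require Import all_classical all_reals all_analysis.
From mathcomp Require Import ring lra.
Import Order.TTheory GRing.Theory Num.Theory.
Local Open Scope ring_scope.
Set Implicit Arguments. Unset Strict Implicit. Unset Printing Implicit Defensive.

(* Every segment of the simplex through u and p <> u lies on the line u + t (p - u),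
   and the t with u + t (p - u) in the simplex form an interval [-x, y] whose ends are
   where a coordinate vanishes; so the maximal segment is [u - x d, u + y d] with
   d = p - u, and it is unique.  With w = 1/n and D = |d|^2 one has <a, b> = w - x y D,
   |a|^2 = w + x^2 D, |b|^2 = w + y^2 D.  Cauchy-Schwarz gives |a| |b| >= w + x y D,
   and the vanishing coordinates give x y D >= 2 w^2, hence
   cos <= (w - 2 w^2) / (w + 2 w^2) = (n - 2) / (n + 2), with equality for
   d = (-1, 0, ..., 0, 1) / n. *)

Section Euclidean.
Variables (R : realType) (n : nat).
Implicit Types (c : R) (d : 'rV[R]_n).

Lemma dot_ge0 d : 0 <= dot d d.
Proof. by apply: sumr_ge0 => i _; rewrite -expr2 sqr_ge0. Qed.

Lemma enormZ c d : enorm (c *: d) = `|c| * enorm d.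
Proof.
rewrite /enorm /dot -sqrtr_sqr -sqrtrM ?sqr_ge0 // mulr_sumr.
by congr Num.sqrt; apply: eq_bigr => i _; rewrite !mxE; ring.
Qed.

Lemma enorm_gt0 d : d != 0 -> 0 < enorm d.
Proof.
move=> d_neq0; rewrite sqrtr_gt0 lt_def dot_ge0 andbT.
apply: contra d_neq0 => /eqP dd0; apply/eqP/rowP => i; rewrite mxE.
have /eqP : d ord0 i * d ord0 i = 0.
  by apply: (psumr_eq0P _ dd0) => // j _; rewrite -expr2 sqr_ge0.
by rewrite mulf_eq0 orbb => /eqP.
Qed.

Lemma sqr_add_le_dot d k j : k != j -> d ord0 k ^+ 2 + d ord0 j ^+ 2 <= dot d d.
Proof.
move=> kj; rewrite /dot (bigD1 k) //= (bigD1 j) 1?eq_sym //= addrA !expr2 lerDl.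
by apply: sumr_ge0 => i _; rewrite -expr2 sqr_ge0.
Qed.

Lemma cosang_ge0 (a b : 'rV[R]_n) : in_simplex a -> in_simplex b -> 0 <= cosang a b.
Proof.
move=> [a_ge0 _] [b_ge0 _]; apply: divr_ge0; last by rewrite mulr_ge0 ?sqrtr_ge0.
by apply: sumr_ge0 => i _; apply: mulr_ge0.
Qed.

End Euclidean.

Lemma ler_acos (R : realType) (x y : R) : -1 <= x -> x <= y -> y <= 1 -> acos y <= acos x.
Proof.
move=> x_ge y_ge y_le.
have /acos_def[/andP[ax0 axpi] cx] : -1 <= x <= 1 by apply/andP; split; lra.
have /acos_def[/andP[ay0 aypi] cy] : -1 <= y <= 1 by apply/andP; split; lra.
rewrite leNgt; apply/negP => lt_xy.
have := @ltr_cos R (acos x) (acos y); rewrite !in_itv /= ax0 axpi ay0 aypi.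
by move=> /(_ isT isT); rewrite lt_xy cx cy; lra.
Qed.

Section ChordCosineBound.
Variable R : rcfType.
Implicit Types (N w D x y : R).

Lemma ler_sqrt_cauchy_schwarz w D x y : 0 <= w -> 0 <= D -> 0 <= x * y ->
  w + x * y * D <= Num.sqrt ((w + x * x * D) * (w + y * y * D)).
Proof.
move=> w_ge0 D_ge0 xy_ge0.
have lhs_ge0 : 0 <= w + x * y * D by apply: addr_ge0 => //; apply: mulr_ge0.
have gap_ge0 : 0 <= w * D * (x - y) ^+ 2 by rewrite mulr_ge0 ?sqr_ge0 // mulr_ge0.
have sq_ge0 z : 0 <= w + z * z * D.
  by apply: addr_ge0 => //; rewrite mulr_ge0 // -expr2 sqr_ge0.
rewrite -(ger0_norm lhs_ge0) -sqrtr_sqr ler_sqrt; last exact: mulr_ge0.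
nra.
Qed.

Lemma chord_cos_le N w D x y : 2 <= N -> N * w = 1 -> 0 <= D -> 0 < x -> 0 < y ->
  2 * w ^+ 2 <= x * y * D ->
  (w - x * y * D) / Num.sqrt ((w + x * x * D) * (w + y * y * D)) <= (N - 2) / (N + 2).
Proof.
move=> N_ge2 Nw D_ge0 x_gt0 y_gt0 X_ge.
have w_gt0 : 0 < w by nra.
have xy_ge0 : 0 <= x * y by rewrite mulr_ge0 ?ltW.
have S_ge := ler_sqrt_cauchy_schwarz (ltW w_gt0) D_ge0 xy_ge0.
have S_gt0 : 0 < Num.sqrt ((w + x * x * D) * (w + y * y * D)).
  by apply: lt_le_trans S_ge; have := mulr_ge0 xy_ge0 D_ge0; lra.
have c_ge0 : 0 <= (N - 2) / (N + 2) by rewrite divr_ge0 ?subr_ge0; lra.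
rewrite ler_pdivrMr //; apply: le_trans (ler_wpM2l c_ge0 S_ge).
rewrite [leRHS]mulrAC ler_pdivlMr; last by lra.
have : 0 <= N * (x * y * D - 2 * w ^+ 2) by rewrite mulr_ge0 ?subr_ge0 //; lra.
nra.
Qed.

End ChordCosineBound.

Section BarycentricLine.
Variables (R : realType) (n : nat).
Hypothesis n_gt0 : (0 < n)%N.
Local Notation u := (ubar R n).
Local Notation w := (n%:R^-1 : R).
Implicit Types (r s t x y : R) (d p v : 'rV[R]_n).

Lemma natr_n_neq0 : n%:R != 0 :> R.
Proof. by rewrite pnatr_eq0 -lt0n. Qed.

Lemma invn_gt0 : 0 < w.
Proof. by rewrite invr_gt0 ltr0n. Qed.

Lemma ubar_lineE d t i : (u + t *: d) ord0 i = w + t * d ord0 i.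
Proof. by rewrite !mxE. Qed.

Lemma ubar_line1 p : u + 1 *: (p - u) = p.
Proof. by rewrite scale1r addrC subrK. Qed.

Lemma ubar_lineB d s t : (u + s *: d) - (u + t *: d) = (s - t) *: d.
Proof. by apply/rowP => i; rewrite !mxE; ring. Qed.

Lemma ubar_line_comb d q s t :
  (1 - q) *: (u + s *: d) + q *: (u + t *: d) = u + ((1 - q) * s + q * t) *: d.
Proof. by apply/rowP => i; rewrite !mxE; ring. Qed.

Lemma sum_ubar : \sum_(i < n) w = 1.
Proof. by rewrite sumr_const card_ord -(mulr_natl w n) mulfV ?natr_n_neq0. Qed.

Lemma sum_sub_ubar p : in_simplex p -> \sum_i (p - u) ord0 i = 0.
Proof.
by move=> [_ sum_p]; under eq_bigr do rewrite !mxE; rewrite sumrB sum_p sum_ubar subrr.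
Qed.

Section ZeroSumDirection.
Variable d : 'rV[R]_n.
Hypothesis sum_d : \sum_i d ord0 i = 0.

Lemma sum_ubar_line t : \sum_i (u + t *: d) ord0 i = 1.
Proof.
under eq_bigr do rewrite ubar_lineE.
by rewrite big_split /= -mulr_sumr sum_d mulr0 addr0 sum_ubar.
Qed.

Lemma dot_ubar_line s t : dot (u + s *: d) (u + t *: d) = w + s * t * dot d d.
Proof.
rewrite /dot (eq_bigr (fun i => w * w + ((w * (s + t)) * d ord0 i
                                       + s * t * (d ord0 i * d ord0 i)))); last first.
  by move=> i _; rewrite !ubar_lineE; ring.
rewrite !big_split /= sumr_const card_ord -!mulr_sumr sum_d mulr0 add0r.
by rewrite -(mulr_natl (w * w) n) mulVKf ?natr_n_neq0.
Qed.

Lemma in_simplex_ubar_line t :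
  (forall i, 0 <= w + t * d ord0 i) -> in_simplex (u + t *: d).
Proof. by move=> ge0; split; [move=> i; rewrite ubar_lineE | exact: sum_ubar_line]. Qed.

End ZeroSumDirection.

Lemma in_seg_ubar_line d r s t : r <= t <= s -> r < s ->
  in_seg (u + r *: d) (u + s *: d) (u + t *: d).
Proof.
move=> /andP[rt ts] rs; exists ((t - r) / (s - r)); split.
  apply/andP; split; first by rewrite divr_ge0 ?subr_ge0 // ltW.
  by rewrite ler_pdivrMr ?subr_gt0 // mul1r lerD2r.
rewrite ubar_line_comb; congr (_ + _ *: _); field.
by rewrite subr_eq0 gt_eqF.
Qed.

Lemma seg_ubar_line p a b : p <> u -> in_seg a b u -> in_seg a b p ->
  exists s t, a = u + s *: (p - u) /\ b = u + t *: (p - u).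
Proof.
move=> p_neq_u [t [_ u_eq]] [r [_ p_eq]].
have rt : r - t != 0.
  by apply: contraPneq p_neq_u => /eqP; rewrite subr_eq0 p_eq u_eq => /eqP ->.
exists (- t / (r - t)), ((1 - t) / (r - t)).
by rewrite p_eq u_eq; split; apply/rowP => i; rewrite !mxE; field.
Qed.

Definition in_simplex_boundary v := in_simplex v /\ exists i, v ord0 i = 0.

Definition chord d x y :=
  [/\ 0 < x, 0 < y, in_simplex_boundary (u + (- x) *: d) & in_simplex_boundary (u + y *: d)].

Lemma chord_bound d x y t : chord d x y -> in_simplex (u + t *: d) -> - x <= t <= y.
Proof.
move=> [x_gt0 y_gt0 [_ [k ak]] [_ [j bj]]] [ge0 _].
move: (ge0 k) (ge0 j) ak bj; rewrite !ubar_lineE => tk tj ak bj.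
have := invn_gt0; set dk := d ord0 k in tk ak *; set dj := d ord0 j in tj bj * => w_gt0.
have dk_gt0 : 0 < dk by nra.
have dj_lt0 : dj < 0 by nra.
by apply/andP; split; nra.
Qed.

Lemma chord_neq0 d x y : chord d x y -> d != 0.
Proof.
move=> [x_gt0 _ [_ [k ak]] _]; apply: contra_eq_neq ak => ->.
by rewrite scaler0 addr0 mxE gt_eqF ?invn_gt0.
Qed.

Lemma zero_sum_row_max_gt0 d : \sum_i d ord0 i = 0 -> d != 0 ->
  exists2 k, 0 < d ord0 k & forall i, d ord0 i <= d ord0 k.
Proof.
move=> sum_d d_neq0.
have [k _ dk_max] := @arg_maxP _ _ _ (Ordinal n_gt0) predT (fun i => d ord0 i) isT.
exists k => [|i]; last exact: dk_max.
rewrite ltNge; apply: contra d_neq0 => dk_le0; apply/eqP/rowP => i; rewrite mxE.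
have sumN_d : \sum_i - d ord0 i = 0 by rewrite sumrN sum_d oppr0.
apply/eqP; rewrite -oppr_eq0; apply/eqP; apply: (psumr_eq0P _ sumN_d) => // l _.
by rewrite oppr_ge0 (le_trans (dk_max l isT)).
Qed.

Lemma chord_exists d : \sum_i d ord0 i = 0 -> d != 0 -> exists x y, chord d x y.
Proof.
move=> sum_d d_neq0; have w_gt0 := invn_gt0.
have [k dk_gt0 dk_max] := zero_sum_row_max_gt0 sum_d d_neq0.
have sum_Nd : \sum_i (- d) ord0 i = 0.
  by under eq_bigr do rewrite mxE; rewrite sumrN sum_d oppr0.
have Nd_neq0 : - d != 0 by rewrite oppr_eq0.
have [j] := zero_sum_row_max_gt0 sum_Nd Nd_neq0.
rewrite mxE oppr_gt0 => dj_lt0 dj_min.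
have {}dj_min i : d ord0 j <= d ord0 i by have := dj_min i; rewrite !mxE lerN2.
exists (w / d ord0 k), (w / - d ord0 j); split; rewrite ?divr_gt0 ?oppr_gt0 //.
- split; last by exists k; rewrite ubar_lineE mulNr divfK ?subrr // gt_eqF.
  apply: in_simplex_ubar_line => // i.
  have -> : w + - (w / d ord0 k) * d ord0 i = w * (d ord0 k - d ord0 i) / d ord0 k.
    by field; rewrite natr_n_neq0 gt_eqF.
  by rewrite divr_ge0 ?mulr_ge0 ?subr_ge0 ?dk_max ?ltW.
- split; last by exists j; rewrite ubar_lineE invrN mulrN mulNr divfK ?addrN // lt_eqF.
  apply: in_simplex_ubar_line => // i.
  have -> : w + w / - d ord0 j * d ord0 i = w * (d ord0 i - d ord0 j) / - d ord0 j.
    by field; rewrite natr_n_neq0 lt_eqF.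
  by rewrite divr_ge0 ?mulr_ge0 ?subr_ge0 ?dj_min ?oppr_ge0 ?ltW.
Qed.

(* At the vanishing coordinates x d_k = w and y d_j = - w, so
   x y (d_k^2 + d_j^2) >= - 2 (x d_k) (y d_j) = 2 w^2. *)
Lemma chord_dot_ge d x y : chord d x y -> 2 * w ^+ 2 <= x * y * dot d d.
Proof.
move=> [x_gt0 y_gt0 [_ [k ak]] [_ [j bj]]]; move: ak bj; rewrite !ubar_lineE.
have w_gt0 := invn_gt0.
set dk := d ord0 k; set dj := d ord0 j => ak bj.
have kj : k != j by apply/eqP => kj; rewrite /dj -kj -/dk in bj; nra.
have two_sq := sqr_add_le_dot d kj; rewrite -/dk -/dj in two_sq.
have xy_gt0 : 0 < x * y by rewrite mulr_gt0.
have : 0 <= x * y * (dk + dj) ^+ 2 by rewrite mulr_ge0 ?sqr_ge0 ?ltW.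
have := ler_wpM2l (ltW xy_gt0) two_sq.
nra.
Qed.

Lemma chord_cosangE d x y : \sum_i d ord0 i = 0 -> chord d x y ->
  cosang (u + (- x) *: d) (u + y *: d)
  = (w - x * y * dot d d) / Num.sqrt ((w + x * x * dot d d) * (w + y * y * dot d d)).
Proof.
move=> sum_d _; rewrite /cosang /enorm !dot_ubar_line // mulrNN !mulNr -sqrtrM //.
apply: addr_ge0; first exact: ltW invn_gt0.
by rewrite mulr_ge0 ?dot_ge0 // -expr2 sqr_ge0.
Qed.

Lemma chord_cosang_le d x y : (2 <= n)%N -> \sum_i d ord0 i = 0 -> chord d x y ->
  cosang (u + (- x) *: d) (u + y *: d) <= (n%:R - 2) / (n%:R + 2).
Proof.
move=> n_ge2 sum_d chord_xy; have [x_gt0 y_gt0 _ _] := chord_xy.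
rewrite chord_cosangE //; apply: chord_cos_le => //.
- by rewrite (ler_nat R 2 n).
- by rewrite mulfV ?natr_n_neq0.
- exact: dot_ge0.
- exact: chord_dot_ge.
Qed.

Lemma sub_ubar_neq0 p : p <> u -> p - u != 0.
Proof. by move=> p_neq_u; rewrite subr_eq0; apply/eqP. Qed.

Lemma chord_neq_ubar p x y : chord (p - u) x y -> p <> u.
Proof. by move=> /chord_neq0 d_neq0 p_eq_u; rewrite p_eq_u subrr eqxx in d_neq0. Qed.

Lemma chord_max_seg p x y : in_simplex p -> chord (p - u) x y ->
  max_seg p (u + (- x) *: (p - u)) (u + y *: (p - u)).
Proof.
move=> p_simplex chord_xy; have [x_gt0 y_gt0 [a_simplex _] [b_simplex _]] := chord_xy.
have /andP[_ y_ge1] : - x <= 1 <= y by apply: chord_bound chord_xy _; rewrite ubar_line1.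
have seg_at t : - x <= t <= y ->
    in_seg (u + (- x) *: (p - u)) (u + y *: (p - u)) (u + t *: (p - u)).
  by move=> t_in; apply: in_seg_ubar_line => //; lra.
do 2!split => //; split; [|split; [|split]].
- by have := seg_at 0; rewrite scale0r addr0; apply; apply/andP; split; lra.
- by rewrite -{3}(ubar_line1 p); apply: seg_at; apply/andP; split; lra.
- have := @in_seg_ubar_line (p - u) (- x) 1 0; rewrite scale0r addr0 ubar_line1.
  by apply; [apply/andP; split; lra | lra].
move=> a b a_simplex' b_simplex' u_seg p_seg.
have [s [t [a_eq b_eq]]] := seg_ubar_line (chord_neq_ubar chord_xy) u_seg p_seg.
subst a b; have /andP[s_ge s_le] := chord_bound chord_xy a_simplex'.
have /andP[t_ge t_le] := chord_bound chord_xy b_simplex'.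
rewrite !ubar_lineB !enormZ ler_wpM2r ?sqrtr_ge0 // ler_norml ltr0_norm; last by lra.
by apply/andP; split; lra.
Qed.

Lemma max_seg_chord p x y a b : in_simplex p -> chord (p - u) x y -> max_seg p a b ->
  a = u + (- x) *: (p - u) /\ b = u + y *: (p - u).
Proof.
move=> p_simplex chord_xy [a_simplex [b_simplex [u_seg [p_seg [u_seg_ap a_max]]]]].
have [x_gt0 y_gt0 _ _] := chord_xy; have d_neq0 := chord_neq0 chord_xy.
have [s [t [a_eq b_eq]]] := seg_ubar_line (chord_neq_ubar chord_xy) u_seg p_seg.
subst a b; have [a0 [b0 [u0 [p0 _]]]] := chord_max_seg p_simplex chord_xy.
have /andP[s_ge s_le] := chord_bound chord_xy a_simplex.
have /andP[t_ge t_le] := chord_bound chord_xy b_simplex.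
have := a_max _ _ a0 b0 u0 p0.
rewrite !ubar_lineB !enormZ ler_pM2r ?enorm_gt0 // [`|- x - y|]ltr0_norm; last by lra.
rewrite ler_normr => /orP[st | st]; last by split; congr (_ + _ *: _); lra.
have [q [/andP[q_ge0 q_le1]]] := u_seg_ap.
rewrite -[X in _ + q *: X](ubar_line1 p) ubar_line_comb -{1}[u]addr0 => /addrI /eqP.
rewrite eq_sym scaler_eq0 (negbTE d_neq0) orbF => /eqP coef_eq0.
have s_eq : s = y by lra.
by rewrite s_eq in coef_eq0; exfalso; nra.
Qed.

Lemma max_seg_exists_unique p : in_simplex p -> p <> u ->
  exists a b, max_seg p a b /\ (forall a' b', max_seg p a' b' -> a' = a /\ b' = b).
Proof.
move=> p_simplex p_neq_u.
have [x [y chord_xy]] := chord_exists (sum_sub_ubar p_simplex) (sub_ubar_neq0 p_neq_u).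
exists (u + (- x) *: (p - u)), (u + y *: (p - u)); split; first exact: chord_max_seg.
by move=> a' b'; apply: max_seg_chord.
Qed.

Lemma max_seg_cosang_le p a b : (2 <= n)%N -> in_simplex p -> p <> u -> max_seg p a b ->
  cosang a b <= (n%:R - 2) / (n%:R + 2).
Proof.
move=> n_ge2 p_simplex p_neq_u ab_max; have sum_d := sum_sub_ubar p_simplex.
have [x [y chord_xy]] := chord_exists sum_d (sub_ubar_neq0 p_neq_u).
by have [-> ->] := max_seg_chord p_simplex chord_xy ab_max; apply: chord_cosang_le.
Qed.

Lemma max_seg_angle_ge p a b : (2 <= n)%N -> in_simplex p -> p <> u -> max_seg p a b ->
  acos ((n%:R - 2) / (n%:R + 2)) <= angle a b.
Proof.
move=> n_ge2 p_simplex p_neq_u ab_max; have [a_simplex [b_simplex _]] := ab_max.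
have cos_ge0 := cosang_ge0 a_simplex b_simplex.
have cos_le := max_seg_cosang_le n_ge2 p_simplex p_neq_u ab_max.
have n_ge0 : 0 <= n%:R :> R by rewrite ler0n.
have c_le1 : (n%:R - 2) / (n%:R + 2) <= 1 :> R by rewrite ler_pdivrMr ?mul1r; lra.
by apply: ler_acos => //; lra.
Qed.

End BarycentricLine.

Section ExtremalPair.
Variables (R : realType) (m : nat).
Local Notation n := m.+2.
Local Notation u := (ubar R n).
Local Notation w := (n%:R^-1 : R).

Definition star_dir : 'rV[R]_n :=
  \row_(i < n) ((if (i : nat) == 0%N then -1 else if (i : nat) == m.+1 then 1 else 0) / n%:R).

Let n_gt0 : (0 < n)%N := ltn0Sn m.+1.

Lemma sub_b_star_ubar : b_star R n - u = star_dir.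
Proof.
apply/rowP => i; rewrite !mxE; have := natr_n_neq0 R n_gt0.
by case: ifP => _; [|case: ifP => _] => nz; field.
Qed.

Lemma a_star_ubar_line : a_star R n = u + (-1) *: (b_star R n - u).
Proof.
rewrite sub_b_star_ubar; apply/rowP => i; rewrite !mxE; have := natr_n_neq0 R n_gt0.
by case: ifP => _; [|case: ifP => _] => nz; field.
Qed.

Lemma sum_ord0_max (f : 'I_n -> R) :
  (forall i, i != ord0 -> i != ord_max -> f i = 0) -> \sum_i f i = f ord0 + f ord_max.
Proof.
move=> f_mid; rewrite (bigD1 ord0) //= (bigD1 ord_max) //= big1 ?addr0 //.
by move=> i /andP[i_neq_max i_neq0]; apply: f_mid.
Qed.

Lemma star_dir_mid i : i != ord0 -> i != ord_max -> star_dir ord0 i = 0.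
Proof.
move=> i_neq0 i_neq_max; rewrite mxE.
by rewrite -[(i : nat) == 0%N]/(i == ord0) -[(i : nat) == m.+1]/(i == ord_max) !ifN // mul0r.
Qed.

Lemma star_dir0 : star_dir ord0 ord0 = - w.
Proof. by rewrite mxE /= mulN1r. Qed.

Lemma star_dir_max : star_dir ord0 ord_max = w.
Proof. by rewrite mxE /= eqxx mul1r. Qed.

Lemma sum_star_dir : \sum_i star_dir ord0 i = 0.
Proof. by rewrite sum_ord0_max ?star_dir0 ?star_dir_max ?addNr //; apply: star_dir_mid. Qed.

Lemma dot_star_dir : dot star_dir star_dir = 2 * w ^+ 2.
Proof.
rewrite /dot sum_ord0_max ?star_dir0 ?star_dir_max; first by rewrite mulrNN -mulr2n mulr_natl expr2.
by move=> i i_neq0 i_neq_max; rewrite star_dir_mid ?mul0r.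
Qed.

Lemma chord_star_dir : chord star_dir 1 1.
Proof.
have w_gt0 := invn_gt0 R n_gt0.
have coord_ge0 (t : R) i : 0 <= 1 - t -> 0 <= 1 + t -> 0 <= w + t * star_dir ord0 i.
  move=> t_le1 t_geN1; have [-> | i_neq0] := eqVneq i ord0.
    by rewrite star_dir0 mulrN -{1}[w]mul1r -mulrBl mulr_ge0 // ltW.
  have [-> | i_neq_max] := eqVneq i ord_max.
    by rewrite star_dir_max -{1}[w]mul1r -mulrDl mulr_ge0 // ltW.
  by rewrite star_dir_mid // mulr0 addr0 ltW.
split; rewrite ?ltr01 //; split.
- by apply: in_simplex_ubar_line sum_star_dir _ _ => // i; apply: coord_ge0; lra.
- by exists ord_max; rewrite ubar_lineE star_dir_max mulN1r addrN.
- by apply: in_simplex_ubar_line sum_star_dir _ _ => // i; apply: coord_ge0; lra.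
- by exists ord0; rewrite ubar_lineE star_dir0 mul1r addrN.
Qed.

Lemma chord_b_star : chord (b_star R n - u) 1 1.
Proof. by rewrite sub_b_star_ubar; apply: chord_star_dir. Qed.

Lemma b_star_simplex : in_simplex (b_star R n).
Proof. by have [_ _ _ [+ _]] := chord_b_star; rewrite ubar_line1. Qed.

Lemma max_seg_star : max_seg (b_star R n) (a_star R n) (b_star R n).
Proof.
have := chord_max_seg _ b_star_simplex chord_b_star.
by rewrite -a_star_ubar_line ubar_line1; apply.
Qed.

Lemma cosang_star : cosang (a_star R n) (b_star R n) = (n%:R - 2) / (n%:R + 2).
Proof.
rewrite a_star_ubar_line -{2}(ubar_line1 (b_star R n)) sub_b_star_ubar.
rewrite chord_cosangE; [|done|exact: sum_star_dir|exact: chord_star_dir].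
rewrite dot_star_dir !mul1r -expr2 sqrtr_sqr ger0_norm.
  by field; rewrite -!natrD !pnatr_eq0.
have w_ge0 := ltW (invn_gt0 R n_gt0).
by apply: addr_ge0 => //; apply: mulr_ge0 => //; apply: exprn_ge0.
Qed.

Lemma b_star_neq_ubar : b_star R n <> u.
Proof. exact: (chord_neq_ubar _ chord_b_star). Qed.

End ExtremalPair.

Theorem theorem1p1 (R : realType) (n : nat) (hn : (3 <= n)%N) :
  (* existence and uniqueness of the maximal segment endpoints a(p), b(p) *)
  (forall p : 'rV[R]_n, in_simplex p -> p <> ubar R n ->
     exists a b, max_seg p a b /\
       (forall a' b', max_seg p a' b' -> a' = a /\ b' = b)) /\
  (* (n-2)/(n+2) is an upper bound of the cosine over all p *)
  (forall p a b : 'rV[R]_n, in_simplex p -> p <> ubar R n -> max_seg p a b ->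
     cosang a b <= (n%:R - 2) / (n%:R + 2)) /\
  (* ... attained by the pair a_star, b_star *)
  (exists p : ('rV[R]_n), in_simplex p /\ p <> ubar R n /\
     max_seg p (a_star R n) (b_star R n)) /\
  cosang (a_star R n) (b_star R n) = (n%:R - 2) / (n%:R + 2) /\
  (* minimal angle spread equals arccos((n-2)/(n+2)) *)
  (forall p a b : 'rV[R]_n, in_simplex p -> p <> ubar R n -> max_seg p a b ->
     acos ((n%:R - 2) / (n%:R + 2)) <= angle a b) /\
  (exists p a b : ('rV[R]_n), in_simplex p /\ p <> ubar R n /\ max_seg p a b /\
     angle a b = acos ((n%:R - 2) / (n%:R + 2))).
Proof.
case: n hn => [|[|[|m]]] // _.
have star := And3 (b_star_simplex R m.+1) (@b_star_neq_ubar R m.+1) (max_seg_star R m.+1).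
split; first exact: max_seg_exists_unique.
split; first by move=> p a b; apply: max_seg_cosang_le.
split; first by exists (b_star R m.+3); case: star.
split; first exact: cosang_star.
split; first by move=> p a b; apply: max_seg_angle_ge.
exists (b_star R m.+3), (a_star R m.+3), (b_star R m.+3).
by case: star => *; rewrite /angle cosang_star.
Qed.
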